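(* Let $m\ge 1$ and $n\ge 2$ be integers. Assume that $G$ is a topological group such that $c_0(G)=c(G)$ and this subgroup has index $n$ in $G$. Then a space $X$ has precisely $m$ connected components if and only if the connected component $c(C_p(X,G))$ of the identity has index $n^m$ in $C_p(X,G)$.
   Context: All spaces are Tychonoff and non-empty; topological groups are Hausdorff. For a topological group $K$, $c(K)$ is the connected component of the identity and $c_0(K)$ is the pathwise connected component of the identity (union of all pathwise connected subsets containing the identity). $C_p(X,G)$ is the group of continuous maps $X\to G$ with pointwise operations and the topology of pointwise convergence. *)

From HB Require Import structures.
From mathcomp Require Import all_boot all_order all_algebra.
From mathcomp Require Import all_classical all_reals all_analysis.
Set Implicit Arguments. Unset Strict Implicit. Unset Printing Implicit Defensive.
Import Order.TTheory GRing.Theory Num.Theory.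
Import numFieldNormedType.Exports.
Local Open Scope classical_set_scope.
Local Open Scope ring_scope.

Definition completely_regular (R : realType) (X : topologicalType) : Prop :=
  forall (a : X) (B : set X), closed B -> ~ B a ->
    exists f : X -> R,
      [/\ continuous f, (forall x, 0 <= f x <= 1), f a = 0 &
          (forall b, B b -> f b = 1)].

Definition tychonoff_space (R : realType) (X : topologicalType) : Prop :=
  completely_regular R X /\ hausdorff_space X.

Definition is_topological_group (G : topologicalType)
  (mul : G -> G -> G) (inv : G -> G) (one : G) : Prop :=
  [/\ (forall x y z, mul x (mul y z) = mul (mul x y) z),
      (forall x, mul one x = x /\ mul x one = x),
      (forall x, mul (inv x) x = one /\ mul x (inv x) = one),
      continuous (fun p : G * G => mul p.1 p.2) &
      continuous inv /\ hausdorff_space G].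

Definition path_connected (R : realType) (T : topologicalType) (A : set T) : Prop :=
  forall x y, A x -> A y ->
    exists f : R -> T,
      [/\ {within `[0%R, 1%R], continuous f}, f 0%R = x, f 1%R = y &
          f @` `[0%R, 1%R] `<=` A].

Definition path_component (R : realType) (T : topologicalType) (A : set T) (x : T) :=
  \bigcup_(B in [set C : set T | [/\ C x, C `<=` A & path_connected R C]]) B.

Definition left_cosets (T : Type) (mul : T -> T -> T) (K H : set T) : set (set T) :=
  [set [set mul x h | h in H] | x in K].

Definition has_index (T : Type) (mul : T -> T -> T) (K H : set T) (k : nat) : Prop :=
  (left_cosets mul K H #= `I_k)%card.

Definition components (X : topologicalType) : set (set X) :=
  [set connected_component [set: X] x | x in [set: X]].

Definition Cp (X G : topologicalType) : set {ptws X -> G} :=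
  [set f : {ptws X -> G} | continuous (f : X -> G)].

Definition ptws_mul (X G : topologicalType) (mul : G -> G -> G)
  (f g : {ptws X -> G}) : {ptws X -> G} := fun x => mul (f x) (g x).
Definition ptws_one (X G : topologicalType) (one : G) : {ptws X -> G} :=
  fun _ => one.

Arguments components X : clear implicits.
Arguments Cp X G : clear implicits.
Arguments ptws_one X G one : clear implicits.

(* Write C for c(G) and K for the component of the identity in C_p(X,G).
   Since c_0(G) = C, a path in C from c to one composed with a [0,1]-valued
   Urysohn function of the Tychonoff space X lies in K; such maps can be
   prescribed at one point and equal to one on any finite set, so every
   continuous map with values in C lies in the closure of K, hence in K.
   Thus f K = g K iff f(x) C = g(x) C for every x. If X has m components, they
   are open, f K is determined by the cosets of C taken by f on each component,
   and every choice of such cosets is realised: the index is n^m. Conversely,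
   for a outside C, the maps equal to a on a clopen set U and to one off U
   give distinct cosets of K, so finite index forces finitely many clopen
   sets, hence finitely many components, say k, and n^k = n^m gives k = m. *)

From HB Require Import structures.
From mathcomp Require Import all_boot all_order all_algebra.
From mathcomp Require Import all_classical all_reals all_analysis.
From mathcomp Require Import finmap lra.
Import Order.TTheory GRing.Theory Num.Theory numFieldNormedType.Exports.
Set Implicit Arguments.
Unset Strict Implicit.
Unset Printing Implicit Defensive.
Local Open Scope classical_set_scope.

Definition group_laws (T : Type) (mul : T -> T -> T) (inv : T -> T) (one : T) :=
  [/\ (forall x y z, mul x (mul y z) = mul (mul x y) z),
      (forall x, mul one x = x), (forall x, mul x one = x),
      (forall x, mul (inv x) x = one) & (forall x, mul x (inv x) = one)].

Section GroupLaws.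
Variables (T : Type) (mul : T -> T -> T) (inv : T -> T) (one : T).
Hypothesis gT : group_laws mul inv one.

Let mulA : forall x y z, mul x (mul y z) = mul (mul x y) z.
Proof. by case: gT. Qed.
Let mul1g : forall x, mul one x = x.
Proof. by case: gT. Qed.
Let mulg1 : forall x, mul x one = x.
Proof. by case: gT. Qed.
Let mulVg : forall x, mul (inv x) x = one.
Proof. by case: gT. Qed.
Let mulgV : forall x, mul x (inv x) = one.
Proof. by case: gT. Qed.

Lemma grp_mulKg a b : mul (inv a) (mul a b) = b.
Proof. by rewrite mulA mulVg mul1g. Qed.

Lemma grp_mulKVg a b : mul a (mul (inv a) b) = b.
Proof. by rewrite mulA mulgV mul1g. Qed.

Lemma grp_inv_uniq x y : mul x y = one -> x = inv y.
Proof. by move=> e; rewrite -[x]mulg1 -(mulgV y) mulA e mul1g. Qed.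

Lemma grp_invK a : inv (inv a) = a.
Proof. exact/esym/grp_inv_uniq. Qed.

Lemma grp_inv1 : inv one = one.
Proof. exact/esym/grp_inv_uniq. Qed.

Lemma grp_invM a b : inv (mul a b) = mul (inv b) (inv a).
Proof.
by apply/esym/grp_inv_uniq; rewrite -mulA (mulA (inv a)) mulVg mul1g mulVg.
Qed.

Variable H : set T.
Hypotheses (H1 : H one) (HM : forall a b, H a -> H b -> H (mul a b))
  (HV : forall a, H a -> H (inv a)).

Lemma grp_coset_eqP a b :
  [set mul a h | h in H] = [set mul b h | h in H] <-> H (mul (inv a) b).
Proof.
split=> [e|Hab].
  have : [set mul a h | h in H] b by rewrite e; exists one.
  by case=> h Hh <-; rewrite grp_mulKg.
apply/seteqP; split=> _ [h Hh <-].
  exists (mul (inv (mul (inv a) b)) h); first exact/HM/Hh/HV.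
  by rewrite grp_invM grp_invK -mulA grp_mulKVg.
by exists (mul (mul (inv a) b) h); [exact: HM|rewrite -mulA grp_mulKVg].
Qed.

End GroupLaws.

Lemma within_continuous_comp_within (T U V : topologicalType) (A : set U)
    (B : set T) (f : T -> U) (g : U -> V) :
  {within A, continuous g} -> {within B, continuous f} ->
  (forall x, B x -> A (f x)) -> {within B, continuous (g \o f)}.
Proof.
move=> cg cf fBA; rewrite continuous_subspace_in => b /set_mem Bb.
have Afb := fBA _ Bb.
move: cg; rewrite continuous_subspace_in => /(_ (f b) (mem_set Afb)) cg.
move: cf; rewrite continuous_subspace_in => /(_ b (mem_set Bb)) cf.
move=> W /= Wn.
have HN : nbhs_subspace (f b) (g @^-1` W) := cg W Wn.
rewrite -(nbhs_subspace_in Afb) in HN.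
have HM : nbhs_subspace b (f @^-1` [set y | A y -> W (g y)]) := cf _ HN.
rewrite -(nbhs_subspace_in Bb) in HM.
change (@nbhs_subspace _ B b ((g \o f) @^-1` W)).
rewrite -(nbhs_subspace_in Bb).
move: HM; rewrite /within /=; apply: (@filterS _ (nbhs b)) => z Hz Bz.
exact: Hz Bz (fBA _ Bz).
Qed.

Section ConnectedComponents.
Variable T : topologicalType.

Lemma connected_closure_between (A B : set T) :
  connected A -> A `<=` B -> B `<=` closure A -> connected B.
Proof.
move=> cA AB BclA U [z Uz] [V oV UV] [F cF UF].
have AUA : A `&` U = A.
  apply: cA.
  - have [Bz Vz] : (B `&` V) z by rewrite -UV.
    have [w [Aw Vw]] := BclA z Bz V (open_nbhs_nbhs (conj oV Vz)).
    by exists w; split => //; rewrite UV; split => //; exact: AB.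
  - by exists V => //; rewrite UV setIA (setIidl AB).
  - by exists F => //; rewrite UF setIA (setIidl AB).
apply/seteqP; split=> [y|y By]; first by rewrite UV => -[].
rewrite UF; split => //.
have AF : A `<=` F by rewrite -AUA UF => w [_ []].
by rewrite ((closure_id F).1 cF); exact: closureS AF _ (BclA y By).
Qed.

Lemma connected_component_map (A : set T) (o : T) (m : T -> T) :
  continuous m -> (forall y, A y -> A (m y)) ->
  connected_component A o (m o) ->
  forall b, connected_component A o b -> connected_component A o (m b).
Proof.
move=> cm Am Kmo b Kb.
have Ao : A o by apply: contrapT => nAo; move: Kb; rewrite connected_component_out.
suff : (m @` connected_component A o `|` connected_component A o) `<=`
    connected_component A o by apply; left; exists b.
apply: connected_component_max.
- by right; exact: connected_component_refl.
- move=> y [[z Kz <-]|Ky]; last exact: connected_component_sub Ky.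
  exact/Am/(connected_component_sub Kz).
- apply: connectedU; last exact: component_connected.
  + by exists (m o); split => //; exists o => //; exact: connected_component_refl.
  + apply: connected_continuous_connected; first exact: component_connected.
    exact: continuous_subspaceT.
Qed.

Lemma connected_component_clopen_sub (U : set T) z :
  clopen U -> U z -> connected_component [set: T] z `<=` U.
Proof.
move=> [oU cU] Uz.
have <- : connected_component [set: T] z `&` U = connected_component [set: T] z.
  apply: component_connected.
  - by exists z; split => //; exact: connected_component_refl.
  - by exists U.
  - by exists U.
by move=> y [].
Qed.

Lemma finite_components_open : finite_set (components T) ->
  forall z, open (connected_component [set: T] z).
Proof.
move=> fin z.
have -> : connected_component [set: T] z =
    ~` \bigcup_(Q in components T `\` [set connected_component [set: T] z]) Q.
  apply/seteqP; split.
    move=> y zy [Q [[w _ <-] nQ] wy]; apply: nQ.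
    by rewrite /= (same_connected_component wy) (same_connected_component zy).
  move=> y ny; apply: contrapT => nzy; apply: ny.
  exists (connected_component [set: T] y); last exact: connected_component_refl.
  split; first by exists y.
  by move=> /= e; apply: nzy; rewrite -e; exact: connected_component_refl.
apply: closed_openC; apply: closed_bigcup; first exact: finite_setD.
by move=> _ [[w _ <-] _]; apply: component_closed; exact: closedT.
Qed.

(* With finitely many clopen sets, the intersection of those containing [z]
   is clopen and has no proper clopen subset containing [z], so it is the
   component of [z]. *)
Lemma finite_clopen_components : finite_set (@clopen T) ->
  finite_set (components T).
Proof.
move=> finClo; apply: (sub_finite_set _ finClo) => _ [z _ <-].
pose D := [set U | clopen U /\ U z].
pose Q := \bigcap_(U in D) U.
have DQ U : D U -> Q `<=` U by move=> DU y; apply.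
have finD : finite_set D by apply: (sub_finite_set _ finClo) => U [].
have cQ : closed Q by apply: closed_bigI => U [[]].
have oQ : open Q.
  rewrite -[Q]setCK; apply: closed_openC; rewrite setC_bigcap.
  by apply: closed_bigcup => // U [[oU _] _]; exact: open_closedC.
have Qz : Q z by move=> U [].
suff -> : connected_component [set: T] z = Q by [].
apply/seteqP; split=> [y zy U [CU Uz]|].
  exact: connected_component_clopen_sub CU Uz _ zy.
apply: connected_component_max => // B [b Bb] [V oV BV] [F cF BF].
have BQ : B `<=` Q by rewrite BV => y [].
have CB : clopen B by split; [rewrite BV; exact: openI|rewrite BF; exact: closedI].
have [Bz|nBz] := pselect (B z); first by apply/seteqP; split => //; apply: DQ.
have : Q `<=` ~` B by apply: DQ; split => //; exact: clopenC.
by move=> /(_ b (BQ b Bb)).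
Qed.

End ConnectedComponents.

Lemma locally_constant_continuous (X Y : topologicalType) (f : X -> Y) :
  (forall z, \forall y \near z, f y = f z) -> continuous f.
Proof. by move=> lc z; apply: cvg_near_cst; exact: lc. Qed.

Lemma component_constant_continuous (X Y : topologicalType) (f : X -> Y) :
  finite_set (components X) ->
  (forall z w, connected_component [set: X] z w -> f w = f z) -> continuous f.
Proof.
move=> fin fc; apply: locally_constant_continuous => z.
have : nbhs z (connected_component [set: X] z).
  apply: open_nbhs_nbhs; split; first exact: finite_components_open.
  exact: connected_component_refl.
by apply: filterS; exact: fc.
Qed.

Lemma clopen_if_continuous (X Y : topologicalType) (U : set X) (a b : Y) :
  clopen U -> continuous (fun z => if `[< U z >] then a else b).
Proof.
move=> [oU cU]; apply: locally_constant_continuous => z.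
have [Uz|nUz] := pselect (U z).
  have : nbhs z U by exact: open_nbhs_nbhs.
  by apply: filterS => y Uy; rewrite !asboolT.
have : nbhs z (~` U) by apply: open_nbhs_nbhs; split => //; exact: closed_openC.
by apply: filterS => y Uy; rewrite !asboolF.
Qed.

Lemma ptws_continuous (T : topologicalType) (X : Type) (G : topologicalType)
    (F : T -> {ptws X -> G}) :
  (forall x, continuous (fun t => F t x)) -> continuous F.
Proof.
move=> cF t; apply/cvg_sup => i; apply/cvg_image.
  by apply/seteqP; split => // y _; exists (fun=> y).
move=> W /= Wn; exists [set g : {ptws X -> G} | W (g i)]; first exact: cF.
by apply/seteqP; split => [y [g Wg <-]//|y Wy]; exists (fun=> y).
Qed.

Lemma ptws_eval_continuous (X : eqType) (G : topologicalType) (x : X) :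
  continuous (fun g : {ptws X -> G} => g x).
Proof. by move=> g W Wn; exact: (@proj_continuous X (fun=> G) x g W Wn). Qed.

Lemma ptws_nbhs_finite (X : choiceType) (G : topologicalType)
    (h : {ptws X -> G}) (N : set {ptws X -> G}) :
  nbhs h N -> exists s : seq X,
    forall g : {ptws X -> G}, (forall x, x \in s -> g x = h x) -> N g.
Proof.
move=> [P [[Q QfinP PQ] Ph] PN].
rewrite -PQ in Ph; case: Ph => V JV Vh.
have [L Lsub VL] := QfinP _ JV.
have hL M : M \in L -> M h by move=> ML; move: Vh; rewrite -VL; apply.
suff [s Hs] : exists s : seq X, forall g : {ptws X -> G},
    (forall x, x \in s -> g x = h x) -> forall M, M \in enum_fset L -> M g.
  exists s => g Hg; apply: PN; rewrite -PQ; exists V => //.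
  by rewrite -VL; cbn => M ML; exact: Hs g Hg M ML.
have : forall M, M \in enum_fset L -> M \in L by [].
elim: (enum_fset L) => [|M l IH] HL; first by exists [::].
have [s Hs] : exists s : seq X, forall g : {ptws X -> G},
    (forall x, x \in s -> g x = h x) -> forall M, M \in l -> M g.
  by apply: IH => M0 M0l; apply: HL; rewrite inE M0l orbT.
have ML : M \in L by apply: HL; rewrite inE eqxx.
have /set_mem [i _ [A oA AM]] := Lsub _ ML.
exists (i :: s) => g Hg M0; rewrite inE => /orP[/eqP ->|M0l].
  rewrite -AM /= (Hg i); last by rewrite inE eqxx.
  by have := hL _ ML; rewrite -AM.
by apply: Hs => // x xs; apply: Hg; rewrite inE xs orbT.
Qed.

Lemma card_image_repr (T U : Type) (q : T -> U) (n : nat) (t0 : T) :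
  (q @` setT #= `I_n)%card -> exists (e : T -> nat) (r : nat -> T),
  [/\ forall a, (e a < n)%N, forall a b, e a = e b <-> q a = q b &
      forall i, (i < n)%N -> e (r i) = i].
Proof.
move=> /pcard_eqP /bijPex [e be]; exists (fun a => e (q a)).
have /choice [r Hr] : forall i, exists a, (i < n)%N -> e (q a) = i.
  move=> i; case: (ltnP i n) => [lt|ge]; last by exists t0.
  have [Q [a _ <-] eQ] := set_bij_surj be (lt : `I_n i).
  by exists a.
exists r; split => // [a|a b].
  exact: (set_bij_homo be (imageP q I)).
split=> [eab|->//]; apply: (set_bij_inj be) => //; apply/mem_set; exact: imageP.
Qed.

Lemma card_setT_fin (T : finType) : ([set: T] #= `I_#|T|)%card.
Proof.
have -> : [set: T] = (@enum_val T predT) @` [set: 'I_#|T|].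
  apply/seteqP; split => // x _; exists (enum_rank x) => //; exact: enum_rankK.
apply: card_eq_trans (card_esym card_II).
by apply: inj_card_eq => i j _ _; exact: enum_val_inj.
Qed.

Lemma convex1_in01 (R : realFieldType) (t a : R) :
  (0 <= t <= 1)%R -> (0 <= a <= 1)%R -> (0 <= 1 - t + t * a <= 1)%R.
Proof. by move=> /andP[t0 t1] /andP[a0 a1]; apply/andP; split; nra. Qed.

Lemma convex1_continuous (T : topologicalType) (R : numFieldType) (t a : T -> R) :
  continuous t -> continuous a -> continuous (fun z => 1 - t z + t z * a z)%R.
Proof.
move=> ct ca z.
have -> : (fun z => 1 - t z + t z * a z)%R = (cst 1 - t + t \* a)%R by [].
apply: continuousD; last by apply: continuousM; [exact: ct|exact: ca].
by apply: continuousB; [exact: cst_continuous|exact: ct].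
Qed.

Section TopologicalGroup.
Variables (G : topologicalType) (mul : G -> G -> G) (inv : G -> G) (one : G).
Hypothesis tg : is_topological_group mul inv one.

Let gl : group_laws mul inv one.
Proof.
case: tg => mulA mul1 mulV _ _.
split=> [|x|x|x|x]; first exact: mulA.
- by case: (mul1 x).
- by case: (mul1 x).
- by case: (mulV x).
- by case: (mulV x).
Qed.
Let mulA : forall x y z, mul x (mul y z) = mul (mul x y) z.
Proof. by case: gl. Qed.
Let mul1g : forall x, mul one x = x.
Proof. by case: gl. Qed.
Let mulg1 : forall x, mul x one = x.
Proof. by case: gl. Qed.
Let mulVg : forall x, mul (inv x) x = one.
Proof. by case: gl. Qed.
Let mulgV : forall x, mul x (inv x) = one.
Proof. by case: gl. Qed.

Lemma continuous_gmul (T : topologicalType) (f g : T -> G) :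
  continuous f -> continuous g -> continuous (fun x => mul (f x) (g x)).
Proof.
case: tg => _ _ _ mulc _ cf cg x.
apply: (@continuous2_cvg _ _ _ _ _ _ f g mul); last exact: cg.
  exact: mulc (f x, g x).
exact: cf.
Qed.

Lemma continuous_ginv (T : topologicalType) (f : T -> G) :
  continuous f -> continuous (fun x => inv (f x)).
Proof.
by case: tg => _ _ _ _ [invc _] cf x; apply: continuous_comp; [exact: cf|exact: invc].
Qed.

Local Notation C := (connected_component [set: G] one).

Lemma componentG1 : C one.
Proof. exact: connected_component_refl. Qed.

Lemma componentGM a b : C a -> C b -> C (mul a b).
Proof.
move=> Ca; apply: connected_component_map => //; last by rewrite mulg1.
by apply: continuous_gmul; [exact: cst_continuous|move=> ?; exact: cvg_id].
Qed.

Lemma componentGV a : C a -> C (inv a).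
Proof.
apply: connected_component_map => //; last by rewrite (grp_inv1 gl); exact: componentG1.
by apply: continuous_ginv => ?; exact: cvg_id.
Qed.

Lemma component_coset_eqP a b :
  [set mul a h | h in C] = [set mul b h | h in C] <-> C (mul (inv a) b).
Proof. exact: (grp_coset_eqP gl componentG1 componentGM componentGV). Qed.

Lemma component_index_nontrivial n :
  has_index mul [set: G] C n -> (1 < n)%N -> exists a, ~ C a.
Proof.
move=> hGC n1; have [e [r [_ eq_e er]]] := card_image_repr one hGC.
exists (mul (inv (r 0%N)) (r 1%N)) => /component_coset_eqP /eq_e.
by rewrite !er // ltnW.
Qed.

Variable X : topologicalType.

Definition ptws_inv (f : {ptws X -> G}) : {ptws X -> G} := fun x => inv (f x).
Local Notation pmul := (@ptws_mul X G mul).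
Local Notation pone := (ptws_one X G one).
Local Notation K := (connected_component (Cp X G) pone).

Lemma ptws_group_laws : group_laws pmul ptws_inv pone.
Proof.
split=> [f g h|f|f|f|f]; apply: funext => x; rewrite /ptws_mul /ptws_one /ptws_inv.
- exact: mulA.
- exact: mul1g.
- exact: mulg1.
- exact: mulVg.
- exact: mulgV.
Qed.

Lemma Cp_one : Cp X G pone.
Proof. exact: cst_continuous. Qed.

Lemma Cp_mul f g : Cp X G f -> Cp X G g -> Cp X G (pmul f g).
Proof. exact: continuous_gmul. Qed.

Lemma Cp_inv f : Cp X G f -> Cp X G (ptws_inv f).
Proof. exact: continuous_ginv. Qed.

Lemma Cp_component1 : K pone.
Proof. exact/connected_component_refl/Cp_one. Qed.

Lemma Cp_component_val h x : K h -> C (h x).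
Proof.
move=> Kh; suff : (fun g : {ptws X -> G} => g x) @` K `<=` C by apply; exists h.
apply: connected_component_max => //; first by exists pone => //; exact: Cp_component1.
apply: connected_continuous_connected; first exact: component_connected.
exact/continuous_subspaceT/ptws_eval_continuous.
Qed.

Lemma Cp_component_mod f z w : Cp X G f ->
  connected_component [set: X] z w -> C (mul (inv (f z)) (f w)).
Proof.
move=> cf zw.
suff : (fun y => mul (inv (f z)) (f y)) @` connected_component [set: X] z `<=` C.
  by apply; exists w.
apply: connected_component_max => //.
  by exists z; [exact: connected_component_refl|rewrite mulVg].
apply: connected_continuous_connected; first exact: component_connected.
by apply/continuous_subspaceT/continuous_gmul => //; exact: cst_continuous.
Qed.

Variable R : realType.

(* The homotopy [t |-> gamma \o (1 - t + t f)] joins the identity to [gamma \o f]. *)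
Lemma Cp_component_path_comp (gamma : R -> G) (f : X -> R) :
  {within `[0%R, 1%R], continuous gamma} -> gamma 1%R = one ->
  continuous f -> (forall z, (0 <= f z <= 1)%R) -> K (fun z => gamma (f z)).
Proof.
move=> cgamma gamma1 cf f01.
pose H (t : R) : {ptws X -> G} := fun z => gamma (1 - t + t * f z)%R.
have in01 t : (0 <= t <= 1)%R -> forall z, `[0%R, 1%R] (1 - t + t * f z)%R.
  by move=> t01 z; rewrite /= in_itv /=; exact: convex1_in01.
have HK : H @` `[0%R, 1%R] `<=` K.
  apply: connected_component_max.
  - exists 0%R; first by rewrite /= in_itv /= lexx ler01.
    by apply: funext => z; rewrite /H subr0 mul0r addr0.
  - move=> _ [t t01 <-]; apply/continuous_subspace_setT.
    apply: (within_continuous_comp_within cgamma); last by move=> z _; exact: in01.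
    by apply/continuous_subspaceT/convex1_continuous => //; exact: cst_continuous.
  - apply: connected_continuous_connected; first exact: segment_connected.
    apply: ptws_continuous => z.
    apply: (within_continuous_comp_within cgamma); last by move=> t /in01; apply.
    apply/continuous_subspaceT/convex1_continuous => //.
      by move=> ?; exact: cvg_id.
    exact: cst_continuous.
have -> : (fun z => gamma (f z)) = H 1%R.
  by apply: funext => z; rewrite /H subrr add0r mul1r.
by apply: HK; exists 1%R => //; rewrite /= in_itv /= lexx ler01.
Qed.

Hypothesis tych : tychonoff_space R X.
Hypothesis pc : path_component R [set: G] one = C.

Lemma Cp_component_bump (x : X) (s : seq X) (c : G) : x \notin s -> C c ->
  exists u, [/\ K u, u x = c & forall y, y \in s -> u y = one].
Proof.
move=> xs; rewrite -pc => -[B [B1 _ pB] Bc].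
have [gamma [cgamma gamma0 gamma1 _]] := pB c one Bc B1.
have cls : closed [set` s].
  have /accessible_finite_set_closed := hausdorff_accessible tych.2.
  by apply; exact: finite_seq.
have [f [cf f01 fx fs]] : exists f : X -> R, [/\ continuous f,
    (forall z, (0 <= f z <= 1)%R), f x = 0%R & forall y, [set` s] y -> f y = 1%R].
  by apply: tych.1 cls _; apply/negP.
exists (fun z => gamma (f z)); split.
- exact: Cp_component_path_comp.
- by rewrite fx.
- by move=> y ys; rewrite fs.
Qed.

Lemma Cp_component_interpolate h : Cp X G h -> (forall x, C (h x)) ->
  forall s : seq X, exists2 g, K g & forall y, y \in s -> g y = h y.
Proof.
move=> ch hC; elim=> [|x s [g Kg gs]]; first by exists pone => //; exact: Cp_component1.
have [xs|xs] := boolP (x \in s).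
  by exists g => // y; rewrite inE => /orP[/eqP->|]; exact: gs.
have Cgh : C (mul (inv (g x)) (h x)).
  exact/componentGM/hC/componentGV/Cp_component_val.
have [u [Ku ux us]] := Cp_component_bump xs Cgh.
exists (pmul g u).
  apply: connected_component_map Ku.
  - by apply: ptws_continuous => z; apply: continuous_gmul;
      [exact: cst_continuous|exact: ptws_eval_continuous].
  - by move=> y; apply: Cp_mul (connected_component_sub Kg).
  - suff -> : pmul g pone = g by [].
    by apply: funext => z; rewrite /ptws_mul /ptws_one mulg1.
move=> y; rewrite inE /ptws_mul => /orP[/eqP->|ys].
  by rewrite ux (grp_mulKVg gl).
by rewrite us // mulg1; exact: gs.
Qed.

(* Basic neighbourhoods in C_p(X,G) constrain finitely many coordinates, so a
   map with values in C lies in the closure of K. *)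
Lemma Cp_componentP h : K h <-> Cp X G h /\ forall x, C (h x).
Proof.
split=> [Kh|[ch hC]].
  by split=> [|x]; [exact: connected_component_sub Kh|exact: Cp_component_val].
have clh : closure K h.
  move=> N /ptws_nbhs_finite [s Hs].
  have [g Kg gs] := Cp_component_interpolate ch hC s.
  by exists g; split => //; exact: Hs.
suff : K `|` [set h] `<=` K by apply; right.
apply: connected_component_max; first by left; exact: Cp_component1.
  by move=> y [/connected_component_sub //|->].
apply: (@connected_closure_between _ K).
- exact: component_connected.
- exact: subsetUl.
- by move=> y [/subset_closure //|->].
Qed.

Lemma Cp_componentM f g : K f -> K g -> K (pmul f g).
Proof.
move=> /Cp_componentP [cf Cf] /Cp_componentP [cg Cg].
by apply/Cp_componentP; split=> [|x]; [exact: Cp_mul|exact: componentGM].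
Qed.

Lemma Cp_componentV f : K f -> K (ptws_inv f).
Proof.
move=> /Cp_componentP [cf Cf].
by apply/Cp_componentP; split=> [|x]; [exact: Cp_inv|exact: componentGV].
Qed.

Lemma Cp_coset_eqP f g : Cp X G f -> Cp X G g ->
  [set pmul f k | k in K] = [set pmul g k | k in K] <->
  forall x, C (mul (inv (f x)) (g x)).
Proof.
move=> cf cg.
rewrite (grp_coset_eqP ptws_group_laws Cp_component1 Cp_componentM Cp_componentV).
rewrite Cp_componentP; split=> [[]//|]; split=> //.
exact/Cp_mul/cg/Cp_inv.
Qed.

Lemma index_Cp_component n k : has_index mul [set: G] C n -> [set: X] !=set0 ->
  (components X #= `I_k)%card -> has_index pmul (Cp X G) K (n ^ k).
Proof.
move=> hGC [x0 _] hXk.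
have [e [r [e_lt eq_e er]]] := card_image_repr one hGC.
have [kappa [pi [kappa_lt eq_kappa kappa_pi]]] := card_image_repr x0 hXk.
have finX : finite_set (components X) by exists k.
pose step (phi : {ffun 'I_k -> 'I_n}) : {ptws X -> G} :=
  fun z => r (val (phi (Ordinal (kappa_lt z)))).
have Cp_step phi : Cp X G (step phi).
  apply: component_constant_continuous => // z w zw.
  rewrite /step; congr (r (val (phi _))); apply: val_inj => /=.
  by apply/eq_kappa; rewrite (same_connected_component zw).
pose coset phi := [set pmul (step phi) h | h in K].
have coset_inj : injective coset.
  move=> phi psi /(Cp_coset_eqP (Cp_step phi) (Cp_step psi)) eq_phi.
  apply/ffunP => i; apply: val_inj.
  have -> : i = Ordinal (kappa_lt (pi i)) by apply: val_inj; rewrite /= kappa_pi.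
  by have /component_coset_eqP/eq_e := eq_phi (pi i); rewrite !er ?ltn_ord.
have coset_onto : coset @` setT = left_cosets pmul (Cp X G) K.
  apply/seteqP; split=> [_ [phi _ <-]|_ [f cf <-]].
    by exists (step phi) => //; exact: Cp_step.
  exists [ffun i : 'I_k => (Ordinal (e_lt (f (pi i))) : 'I_n)] => //.
  apply/esym/(Cp_coset_eqP cf (Cp_step _)) => z; rewrite /step ffunE /=.
  set w := pi (kappa z).
  have zw : connected_component [set: X] z w.
    have /eq_kappa <- : kappa w = kappa z by rewrite /w kappa_pi.
    exact: connected_component_refl.
  have Cw : C (mul (inv (f w)) (r (e (f w)))).
    by apply/component_coset_eqP/eq_e; rewrite er.
  by have := componentGM (Cp_component_mod cf zw) Cw; rewrite -mulA (grp_mulKVg gl).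
have -> : (n ^ k)%N = #|{ffun 'I_k -> 'I_n}| by rewrite card_ffun !card_ord.
rewrite /has_index -coset_onto.
apply: card_eq_trans (card_setT_fin _).
by apply: inj_card_eq => phi psi _ _; exact: coset_inj.
Qed.

Lemma finite_index_clopen a : ~ C a ->
  finite_set (left_cosets pmul (Cp X G) K) -> finite_set (@clopen X).
Proof.
move=> Ca finCos.
pose ind (U : set X) : {ptws X -> G} := fun z => if `[< U z >] then a else one.
pose coset U := [set pmul (ind U) h | h in K].
have coset_inj : {in [set U : set X | clopen U] &, injective coset}.
  move=> U V /set_mem CU /set_mem CV.
  move=> /(Cp_coset_eqP (clopen_if_continuous CU) (clopen_if_continuous CV)) eqUV.
  apply/seteqP; split => z Uz; apply: contrapT => nz; have := eqUV z; rewrite /ind.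
  - by rewrite (asboolT Uz) (asboolF nz) mulg1 => /componentGV; rewrite (grp_invK gl).
  - by rewrite (asboolT Uz) (asboolF nz) (grp_inv1 gl) mul1g.
rewrite -(eq_finite_set (inj_card_eq coset_inj)).
apply: sub_finite_set finCos => _ [U CU <-]; exists (ind U) => //.
exact: clopen_if_continuous.
Qed.

End TopologicalGroup.

Theorem proposition8p6 (R : realType) (G : topologicalType)
  (mul : G -> G -> G) (inv : G -> G) (one : G) (m n : nat) :
  is_topological_group mul inv one ->
  (1 <= m)%N -> (2 <= n)%N ->
  path_component R [set: G] one = connected_component [set: G] one ->
  has_index mul [set: G] (connected_component [set: G] one) n ->
  forall X : topologicalType, tychonoff_space R X -> [set: X] !=set0 ->
  ((components X #= `I_m)%card <->
   has_index (@ptws_mul X G mul) (Cp X G)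
     (connected_component (Cp X G) (ptws_one X G one)) (n ^ m)%N).
Proof.
move=> tg _ n2 pc hGC X tych Xne; split=> [hXm|hK].
  exact: (index_Cp_component tg tych pc hGC Xne hXm).
have [a Ca] := component_index_nontrivial tg hGC n2.
have [k hXk] := finite_clopen_components
  (finite_index_clopen tg tych pc Ca (ex_intro _ _ hK)).
have hKk := index_Cp_component tg tych pc hGC Xne hXk.
have /card_eq_II/eqP := card_eq_trans (card_esym hKk) hK.
by rewrite eqn_exp2l // => /eqP <-.
Qed.
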